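(* Let $F$ be a set of fields. The following are equivalent: (1) every simple matroid that is representable over all fields in $F$ has a unique minimal tropical basis; (2) the binary field $\mathbb F_2$ is in $F$.
   Context: A matroid $M=([n],\mathscr C)$ is given by its circuit set $\mathscr C$. It is simple if every circuit has cardinality greater than $2$. It is representable over a field $K$ if it is isomorphic to the matroid whose circuits are the minimal linearly dependent subsets of a finite set of vectors in a $K$-vector space. Let ${\bf TP}^{n-1}$ be the tropical projective space over $(\mathbb R\cup\{-\infty\},\max,+)$. For a circuit $C$, $V(C)$ is the set of $x\in{\bf TP}^{n-1}$ such that $\max\{x_i : i\in C\}$ is attained at least twice. For $B\subseteq\mathscr C$, set $V(B)=\bigcap_{C\in B}V(C)$. A subset $B\subseteq\mathscr C$ is a tropical basis if $V(B)=V(\mathscr C)$. It is a minimal tropical basis if no proper subset of it is a tropical basis. *)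

From Stdlib Require Import Rdefinitions.
From HB Require Import structures.
From mathcomp Require Import all_boot all_order all_algebra.
Set Implicit Arguments. Unset Strict Implicit. Unset Printing Implicit Defensive.
Import GRing.Theory.

Definition is_matroid_circuits (n : nat) (circ : {set {set 'I_n}}) : Prop :=
  [/\ set0 \notin circ,
      (forall C1 C2, C1 \in circ -> C2 \in circ -> C1 \subset C2 -> C1 = C2) &
      (forall C1 C2 e, C1 \in circ -> C2 \in circ -> C1 <> C2 ->
         e \in C1 :&: C2 ->
         exists2 C3, C3 \in circ & C3 \subset (C1 :|: C2) :\ e)].

Definition simple_matroid (n : nat) (circ : {set {set 'I_n}}) : Prop :=
  forall C, C \in circ -> 2 < #|C|.

Definition vdependent (K : fieldType) (d n : nat) (v : 'I_n -> 'rV[K]_d)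
  (S : {set 'I_n}) : bool :=
  ~~ free [seq v i | i in S].

(* Representable over K: circuits are (up to relabelling of [n], absorbed in the
   choice of the indexing) the minimal linearly dependent subsets of a finite
   family of vectors in a finite-dimensional K-vector space. *)
Definition representable (K : fieldType) (n : nat) (circ : {set {set 'I_n}}) : Prop :=
  exists (d : nat) (v : 'I_n -> 'rV[K]_d),
    circ = [set S | minset (vdependent v) S].

(* Tropical semiring values: None = -oo, Some r = r. *)
Definition tle (a b : option R) : Prop :=
  match a, b with
  | None, _ => True
  | Some _, None => False
  | Some x, Some y => Rle x y
  end.

(* Points of TP^{n-1} are represented by vectors in (R u {-oo})^n not all -oo;
   all sets below are invariant under tropical scaling, so we work with
   representatives. *)
Definition TPpoint (n : nat) (x : 'I_n -> option R) : Prop :=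
  exists i, x i <> None.

Definition inV (n : nat) (C : {set 'I_n}) (x : 'I_n -> option R) : Prop :=
  exists i j, [/\ i \in C, j \in C, i <> j, x i = x j &
                  forall k, k \in C -> tle (x k) (x i)].

Definition inVset (n : nat) (B : {set {set 'I_n}}) (x : 'I_n -> option R) : Prop :=
  forall C, C \in B -> inV C x.

Definition tropical_basis (n : nat) (circ B : {set {set 'I_n}}) : Prop :=
  B \subset circ /\
  (forall x, TPpoint x -> (inVset B x <-> inVset circ x)).

Definition minimal_tropical_basis (n : nat) (circ B : {set {set 'I_n}}) : Prop :=
  tropical_basis circ B /\
  (forall B' : {set {set 'I_n}}, B' \proper B -> ~ tropical_basis circ B').

Definition iso_F2 (K : fieldType) : Prop :=
  exists f : {rmorphism 'F_2 -> K}, bijective f.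

(* A point x lies outside V(C) exactly when the upper level set S of x at
   max_C x meets C in a single element, and then x lies outside V(D) for every
   circuit D meeting S once; the points equal to 0 on S and -oo elsewhere
   realise every such S.  Hence B is a tropical basis iff every set met exactly
   once by some circuit is met exactly once by a circuit of B.  A circuit that,
   for some S, is the only circuit meeting S once lies in every tropical basis;
   when these essential circuits form a tropical basis, it is the unique minimal
   one.
   They do for a simple matroid represented over F_2: a smallest circuit C with
   C :&: S = {e} is the only circuit meeting the complement of C - e exactly
   once, because the symmetric difference of two circuits contains a circuit
   through each of its elements, and simplicity rules out circuits of size two.
   If no field of F is F_2, every field of F has an element a outside {0, 1}
   and represents U_{2,4}, whose circuits are the complements of points, by
   (1,0), (1,1), (1,a), (0,1); deleting any one circuit of U_{2,4} leaves a
   minimal tropical basis. *)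

From Stdlib Require Import Classical RIneq.
From mathcomp Require Import all_boot all_order all_algebra.
From HB Require Import structures.
From mathcomp Require Import zify ring.
Set Implicit Arguments. Unset Strict Implicit. Unset Printing Implicit Defensive.
Import GRing.Theory.

Lemma tle_refl a : tle a a.
Proof. by case: a => [y|] //=; apply: Rle_refl. Qed.

Lemma tle_trans a b c : tle a b -> tle b c -> tle a c.
Proof. by case: a => [y|]; case: b => [z|]; case: c => [w|] //=; apply: Rle_trans. Qed.

Lemma tle_anti a b : tle a b -> tle b a -> a = b.
Proof. by case: a => [y|]; case: b => [z|] //= yz zy; rewrite (Rle_antisym _ _ yz zy). Qed.

Lemma tle_total a b : tle a b \/ tle b a.
Proof.
case: a => [y|]; case: b => [z|] /=; try by [left | right].
by case: (Rle_or_lt y z) => [|/Rlt_le]; [left | right].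
Qed.

Definition tleb (a b : option R) : bool :=
  match a, b with
  | None, _ => true
  | Some _, None => false
  | Some y, Some z => if Rle_dec y z then true else false
  end.

Lemma tlebP a b : reflect (tle a b) (tleb a b).
Proof.
case: a => [y|]; case: b => [z|] /=; try by constructor.
by case: Rle_dec; constructor.
Qed.

Lemma exists_tle_max (T : eqType) (x : T -> option R) (s : seq T) :
  s != [::] -> exists2 i, i \in s & forall k, k \in s -> tle (x k) (x i).
Proof.
elim: s => [//|a s IHs] _.
have [-> | /IHs[i is_i max_i]] := eqVneq s [::].
  by exists a; rewrite ?mem_head // => k /[!inE] /eqP ->; apply: tle_refl.
have [ai | ia] := tle_total (x a) (x i).
  by exists i; rewrite ?inE ?is_i ?orbT // => k /[!inE] /orP[/eqP -> | /max_i].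
exists a; rewrite ?mem_head // => k /[!inE] /orP[/eqP -> | /max_i ki].
  exact: tle_refl.
exact: tle_trans ki ia.
Qed.

Section TropicalHypersurfaces.

Variable n : nat.
Implicit Types (C D S : {set 'I_n}) (B : {set {set 'I_n}}) (x : 'I_n -> option R).

Definition single_meet C S : bool := #|C :&: S| == 1%N.

Definition no_single_meet B S : bool := [forall C in B, ~~ single_meet C S].

Definition indicator_point S : 'I_n -> option R :=
  fun k => if k \in S then Some R0 else None.

Lemma inV_indicator C S :
  (1 < #|C|)%N -> inV C (indicator_point S) <-> ~~ single_meet C S.
Proof.
rewrite /single_meet /indicator_point => C_gt1; split.
- move=> [i [j [iC jC /eqP ij xij max_i]]]; apply: contra ij => /cards1P[s CSs].
  have /setIP[sC sS] : s \in C :&: S by rewrite CSs set11.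
  have iS : i \in S by move: (max_i s sC); rewrite sS; case: (i \in S).
  have jS : j \in S by move: xij; rewrite iS; case: (j \in S).
  have : i \in C :&: S by rewrite inE iC iS.
  have : j \in C :&: S by rewrite inE jC jS.
  by rewrite CSs !inE => /eqP -> /eqP ->.
- move=> not1.
  have [CS0 | CS_gt1] : #|C :&: S| == 0%N \/ (1 < #|C :&: S|)%N.
    by move: not1; case: #|_| => [|[|m]]; [left | | right].
  + have outS k : k \in C -> (k \in S) = false.
      move=> kC; apply: contraTF CS0 => kS.
      by rewrite cards_eq0; apply/set0Pn; exists k; apply/setIP.
    move/card_gt1P: C_gt1 => [i [j [iC jC ij]]].
    exists i, j; split=> //; first exact/eqP.
      by rewrite !outS.
    by move=> k kC; rewrite !outS.
  + move/card_gt1P: CS_gt1 => [i [j [/setIP[iC iS] /setIP[jC jS] ij]]].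
    exists i, j; split=> //; first exact/eqP.
      by rewrite iS jS.
    by move=> k _; rewrite iS; case: (k \in S) => //=; apply: Rle_refl.
Qed.

Lemma upper_level_set C x : (1 < #|C|)%N -> ~ inV C x ->
  exists S, single_meet C S /\ forall D, single_meet D S -> ~ inV D x.
Proof.
move=> C_gt1 notVC.
have [i iC max_i] : exists2 i, i \in C & forall k, k \in C -> tle (x k) (x i).
  have [|i] := @exists_tle_max _ x (enum C).
    by apply: contraTneq C_gt1; rewrite cardE => ->.
  by rewrite mem_enum => iC max_i; exists i => // k kC; apply: max_i; rewrite mem_enum.
have unique_max k : k \in C -> x k = x i -> k = i.
  move=> kC xki; apply: NNPP => ki; apply: notVC.
  by exists i, k; split=> // ik; apply: ki.
exists [set k | tleb (x i) (x k)]; split.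
- apply/cards1P; exists i; apply/setP => k; rewrite !inE.
  apply/andP/eqP => [[kC /tlebP ik] | ->]; last by split=> //; apply/tlebP/tle_refl.
  by apply: unique_max => //; apply: tle_anti (max_i k kC) ik.
- move=> D /cards1P[s DSs] [j [k [jD kD jk xjk max_j]]].
  have /setIP[sD /[!inE] /tlebP i_s] : s \in D :&: [set k | tleb (x i) (x k)].
    by rewrite DSs set11.
  have ij : tle (x i) (x j) := tle_trans i_s (max_j s sD).
  have : j \in D :&: [set k | tleb (x i) (x k)] by rewrite !inE jD; apply/tlebP.
  have : k \in D :&: [set k | tleb (x i) (x k)] by rewrite !inE kD -xjk; apply/tlebP.
  by rewrite DSs !inE => /eqP ks /eqP js; apply: jk; rewrite js ks.
Qed.

End TropicalHypersurfaces.

Section TropicalBases.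

Variables (n : nat) (circ : {set {set 'I_n}}).
Hypothesis circ_gt1 : forall C, C \in circ -> (1 < #|C|)%N.

Lemma tropical_basisP B : tropical_basis circ B <->
  B \subset circ /\ forall S, no_single_meet B S -> no_single_meet circ S.
Proof.
split=> -[BC basisB]; split=> //; [move=> S noB | move=> x _].
- have [-> | [s sS]] := set_0Vmem S.
    by apply/forall_inP => C _; rewrite /single_meet setI0 cards0.
  have pointS : TPpoint (indicator_point S) by exists s; rewrite /indicator_point sS.
  have /(basisB _ pointS) VS : inVset B (indicator_point S).
    move=> C CB; apply/inV_indicator; first exact/circ_gt1/(subsetP BC).
    exact: (forall_inP noB).
  by apply/forall_inP => C Cc; apply/inV_indicator; [apply: circ_gt1 | apply: VS].
- split=> [VB C Cc | Vc C CB]; last exact/Vc/(subsetP BC).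
  apply: NNPP => notVC; have [S [CS notV]] := upper_level_set (circ_gt1 Cc) notVC.
  have /forall_inPn[D DB] : ~~ no_single_meet B S.
    by apply: contra (basisB S) _; apply/forall_inPn; exists C; rewrite ?negbK.
  by rewrite negbK => /notV; apply; apply: VB.
Qed.

Definition essential C : bool :=
  [exists S, single_meet C S && [forall D in circ, single_meet D S ==> (D == C)]].

Lemma essential_mem_tropical_basis B C :
  tropical_basis circ B -> C \in circ -> essential C -> C \in B.
Proof.
move=> /tropical_basisP[BC basisB] Cc /existsP[S /andP[CS onlyC]].
apply: contraT => CnB.
have noB : no_single_meet B S.
  apply/forall_inP => D DB; apply: contra CnB => DS.
  by have /implyP/(_ DS)/eqP <- := forall_inP onlyC D (subsetP BC D DB).
by have /forall_inP/(_ C Cc) := basisB S noB; rewrite CS.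
Qed.

Hypothesis essential_cover : forall S,
  ~~ no_single_meet circ S -> exists2 C, C \in circ & single_meet C S && essential C.

Lemma essential_tropical_basis : tropical_basis circ [set C in circ | essential C].
Proof.
apply/tropical_basisP; split=> [|S noE]; first by apply/subsetP => C /setIdP[].
apply: contraT => /essential_cover[C Cc /andP[CS essC]].
by have /forall_inP/(_ C) := noE; rewrite inE Cc essC CS => /(_ isT).
Qed.

Lemma unique_minimal_tropical_basis : exists! B, minimal_tropical_basis circ B.
Proof.
set E := [set C in circ | essential C].
have E_sub B : tropical_basis circ B -> E \subset B.
  move=> basisB; apply/subsetP => C /setIdP[Cc essC].
  exact: essential_mem_tropical_basis.
exists E; split.
  split=> [|B' /properP[_ [C CE CnB']] basisB']; first exact: essential_tropical_basis.
  by have /subsetP/(_ C CE) := E_sub B' basisB'; rewrite (negbTE CnB').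
move=> B [basisB minB]; apply/eqP; rewrite eqEproper E_sub //=.
by apply/negP => /minB; apply; apply: essential_tropical_basis.
Qed.

End TropicalBases.

Section BinaryCircuits.

Variables (n : nat) (circ : {set {set 'I_n}}).
Hypothesis circ_simple : simple_matroid circ.
Hypothesis circ_clutter :
  forall C1 C2, C1 \in circ -> C2 \in circ -> C1 \subset C2 -> C1 = C2.
Hypothesis circ_binary : forall C D e, C \in circ -> D \in circ ->
  e \in (C :\: D) :|: (D :\: C) ->
  exists2 C', C' \in circ & (e \in C') && (C' \subset (C :\: D) :|: (D :\: C)).

Lemma binary_circuit_exchange C D e f : C \in circ -> D \in circ ->
  e \in C -> e \notin D -> D :\ f \subset C ->
  exists2 C', C' \in circ &
    [/\ e \in C', C' \subset f |: (C :\: D) & (#|C'| + #|D| <= #|C| + 2)%N].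
Proof.
move=> Cc Dc eC eD DfC.
have DC y : y \in D -> y != f -> y \in C.
  by move=> yD yf; apply: (subsetP DfC); rewrite !inE yf yD.
have eCD : e \in (C :\: D) :|: (D :\: C) by rewrite !inE eC eD.
have [C' C'c /andP[eC' C'CD]] := circ_binary Cc Dc eCD.
have C'fCD : C' \subset f |: (C :\: D).
  apply/(subset_trans C'CD)/subsetP => y.
  rewrite !inE => /orP[/andP[-> ->] | /andP[yC yD]]; first by rewrite orbT.
  by have [//|/(DC y yD) yC'] := eqVneq y f; rewrite yC' in yC.
exists C' => //; split=> //.
have C'_le : (#|C'| <= (#|C :\: D|).+1)%N.
  apply: leq_trans (subset_leq_card C'fCD) _.
  by rewrite cardsU1 -add1n leq_add2r leq_b1.
have D_le : (#|D| <= (#|C :&: D|).+1)%N.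
  rewrite (cardsD1 f D) -add1n leq_add ?leq_b1 //; apply/subset_leq_card/subsetP => y.
  by rewrite !inE => /andP[yf yD]; rewrite yD DC.
move: C'_le D_le (cardsID D C).
by move: #|C| #|D| #|C'| #|C :&: D| #|C :\: D| => c d c' i m; clear; lia.
Qed.

Lemma min_single_meet_circuit_unique S C D e f : C \in circ -> D \in circ ->
  C :&: S = [set e] ->
  (forall C', C' \in circ -> single_meet C' S -> (#|C| <= #|C'|)%N) ->
  D :&: ~: (C :\ e) = [set f] -> D = C.
Proof.
move=> Cc Dc CSe minC DCf.
have in_CS y : (y \in C :&: S) = (y == e) by rewrite CSe inE.
have in_DC y : (y \in D :&: ~: (C :\ e)) = (y == f) by rewrite DCf inE.
have /setIP[eC eS] : e \in C :&: S by rewrite in_CS.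
have /setIP[fD _] : f \in D :&: ~: (C :\ e) by rewrite in_DC.
have DfC : D :\ f \subset C :\ e.
  apply/subsetP => y /setD1P[yf yD]; apply: contraNT yf => yCe.
  by rewrite -in_DC inE yD inE yCe.
have [fe | fe] := eqVneq f e.
  apply: (circ_clutter Dc Cc); apply/subsetP => y yD.
  have [-> | yf] := eqVneq y f; first by rewrite fe.
  by have /(subsetP DfC)/setD1P[] : y \in D :\ f by rewrite !inE yf yD.
exfalso.
have eD : e \notin D.
  apply/negP => eD; have /(subsetP DfC) : e \in D :\ f by rewrite !inE eq_sym fe eD.
  by rewrite setD11.
have [C' C'c [eC' C'fCD C'_card]] :=
  binary_circuit_exchange Cc Dc eC eD (subset_trans DfC (subsetDl C [set e])).
have D_gt2 := circ_simple Dc; have C'_gt2 := circ_simple C'c.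
have [/andP[fS fC'] | not_fSC'] := boolP ((f \in S) && (f \in C')).
  have DS : single_meet D S.
    apply/cards1P; exists f; apply/setP => y; rewrite !inE.
    have [-> | yf] := eqVneq y f; first by rewrite fD.
    apply/negbTE/negP => /andP[yD yS].
    have /(subsetP DfC)/setD1P[ye yC] : y \in D :\ f by rewrite !inE yf yD.
    by move: ye; rewrite -in_CS inE yC yS.
  move: (minC D Dc DS) C'_card C'_gt2.
  by move: #|C| #|D| #|C'| => c d c'; clear; lia.
have C'S : single_meet C' S.
  apply/cards1P; exists e; apply/setP => y; rewrite !inE.
  have [-> | ye] := eqVneq y e; first by rewrite eC' eS.
  apply/negbTE/negP => /andP[yC' yS].
  move/subsetP/(_ y yC'): C'fCD; rewrite !inE => /orP[/eqP yf | /andP[_ yC]].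
    by move: not_fSC'; rewrite -yf yS yC'.
  by move: ye; rewrite -in_CS inE yC yS.
move: (minC C' C'c C'S) C'_card D_gt2.
by move: #|C| #|D| #|C'| => c d c'; clear; lia.
Qed.

Lemma binary_essential_cover S : ~~ no_single_meet circ S ->
  exists2 C, C \in circ & single_meet C S && essential circ C.
Proof.
move=> /forall_inPn[C0 C0c]; rewrite negbK => C0S.
have [C /andP[Cc CS] minC] := @arg_minnP _ C0 (fun C => (C \in circ) && single_meet C S)
  (fun C => #|C|) (introT andP (conj C0c C0S)).
exists C; rewrite // CS /=; move/cards1P: (CS) => [e CSe].
have eC : e \in C by have /setIP[] : e \in C :&: S by rewrite CSe set11.
apply/existsP; exists (~: (C :\ e)); apply/andP; split.
  apply/cards1P; exists e; apply/setP => y; rewrite !inE.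
  by have [-> | ye] := eqVneq y e; rewrite ?eC //= andbN.
apply/forall_inP => D Dc; apply/implyP => /cards1P[f DCf]; apply/eqP.
apply: (min_single_meet_circuit_unique Cc Dc CSe _ DCf) => C' C'c C'S.
by apply: minC; rewrite C'c C'S.
Qed.

End BinaryCircuits.

Local Open Scope ring_scope.

Lemma free_imageP (K : fieldType) (vT : vectType K) (T : finType) (v : T -> vT)
    (S : {set T}) :
  free [seq v i | i in S] <->
  (forall c : T -> K, \sum_(i in S) c i *: v i = 0 -> forall i, i \in S -> c i = 0).
Proof.
have [-> | [x0 _]] := set_0Vmem S.
  have -> : [seq v i | i in set0] = [::] by apply/nilP; rewrite /nilp size_image cards0.
  by rewrite nil_free; split=> // _ c _ i; rewrite inE.
set X := [seq v i | i in S]; set s := enum S.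
have size_X : size X = size s by rewrite size_map.
have sum_X (c : T -> K) :
    \sum_(i in S) c i *: v i = \sum_(j < size X) c (nth x0 s j) *: X`_j.
  rewrite -big_enum (big_nth x0) -/s -size_X big_mkord.
  by apply: eq_bigr => j _; rewrite (nth_map x0) // -size_X.
have s_uniq : uniq s := enum_uniq S.
split.
- move=> /(@freeP _ _ _ (in_tuple X)) freeX c sum0 i iS.
  have i_s : (index i s < size X)%N by rewrite size_X index_mem mem_enum.
  have := freeX (fun j => c (nth x0 s j)) (etrans (esym (sum_X c)) sum0) (Ordinal i_s).
  by rewrite /= nth_index ?mem_enum.
- move=> free_c; apply/(@freeP _ _ _ (in_tuple X)) => k sum0 j.
  pose c x := oapp k 0 (insub (index x s)).
  have c_nth (j' : 'I_(size X)) : c (nth x0 s j') = k j'.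
    by rewrite /c index_uniq ?valK // -size_X.
  rewrite -c_nth; apply: free_c; last by rewrite -mem_enum mem_nth // -size_X.
  by rewrite sum_X -[RHS]sum0; apply: eq_bigr => j' _; rewrite c_nth.
Qed.

Section BinaryRepresentation.

Variables (K : fieldType) (d n : nat) (v : 'I_n -> 'rV[K]_d).
Hypothesis K01 : forall k : K, k = 0 \/ k = 1.
Implicit Types A C D S Z : {set 'I_n}.

Lemma binary_char2 : 1 + 1 = 0 :> K.
Proof. by have [//|/eqP] := K01 (1 + 1); rewrite -subr_eq0 addrK oner_eq0. Qed.

Lemma binary_addrr (w : 'rV[K]_d) : w + w = 0.
Proof. by rewrite -[w]scale1r -scalerDl binary_char2 scale0r. Qed.

Lemma binary_dependentP S :
  vdependent v S <-> exists A, [/\ A \subset S, A != set0 & \sum_(i in A) v i = 0].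
Proof.
split.
- move=> /negP not_free; apply: NNPP => noA; apply/not_free/free_imageP => c sum0 i iS.
  have c1 j : c j != 0 -> c j = 1 by have [->|] := K01 (c j); rewrite ?eqxx.
  have [//|/c1 ci] := eqVneq (c i) 0; exfalso.
  apply: noA; exists [set j in S | c j == 1]; split.
  + by apply/subsetP => j /setIdP[].
  + by apply/set0Pn; exists i; rewrite inE iS ci eqxx.
  + rewrite -[RHS]sum0 [RHS](bigID (fun j => c j == 1)) /= [X in _ + X]big1 ?addr0.
      by apply: eq_big => [j | j /[!inE] /andP[_ /eqP ->]]; rewrite ?inE ?scale1r.
    move=> j /andP[_ cjN1]; have [cj0 | cj1] := K01 (c j); first by rewrite cj0 scale0r.
    by rewrite cj1 eqxx in cjN1.
- move=> [A [AS /set0Pn[a aA] sum0]].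
  apply/negP => /free_imageP/(_ (fun i => (i \in A)%:R)).
  have -> : \sum_(i in S) (i \in A)%:R *: v i = \sum_(i in A) v i.
    rewrite (big_setID A) (setIidPr AS) /= [X in _ + X]big1 ?addr0.
      by apply: eq_bigr => i ->; rewrite scale1r.
    by move=> i /setDP[_ /negbTE ->]; rewrite scale0r.
  by move=> /(_ sum0 a (subsetP AS a aA))/eqP; rewrite aA oner_eq0.
Qed.

Lemma binary_circuit_sum C : minset (vdependent v) C -> \sum_(i in C) v i = 0.
Proof.
move=> /minsetP[/binary_dependentP[A [AC A0 sumA]] minC].
suff <- : A = C by [].
by apply: minC AC; apply/binary_dependentP; exists A.
Qed.

Lemma binary_zero_sum_circuit Z e : \sum_(i in Z) v i = 0 -> e \in Z ->
  exists2 C, minset (vdependent v) C & (e \in C) && (C \subset Z).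
Proof.
move=> sumZ eZ.
pose P (A : {set 'I_n}) := (e \in A) && (\sum_(i in A) v i == 0).
have [C /minsetP[/andP[eC /eqP sumC] minC] CZ] := @minset_exists _ P Z
  (introT andP (conj eZ (introT eqP sumZ))).
exists C; last by rewrite eC CZ.
apply/minsetP; split=> [|W /binary_dependentP[A [AW /set0Pn[a aA] sumA]] WC].
  by apply/binary_dependentP; exists C; split=> //; apply/set0Pn; exists e.
have AC := subset_trans AW WC.
have [eA | eNA] := boolP (e \in A).
  by apply/eqP; rewrite eqEsubset WC -(minC A) //; apply/andP; rewrite eA sumA.
have sumCA : \sum_(i in C :\: A) v i = 0.
  by move: sumC; rewrite (big_setID A) (setIidPr AC) /= sumA add0r.
have CAC : C :\: A = C by apply: minC (subsetDl C A); rewrite /P inE eNA eC sumCA eqxx.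
by move: (subsetP AC a aA); rewrite -CAC inE aA.
Qed.

Lemma binary_sum_symdiff C D :
  \sum_(i in (C :\: D) :|: (D :\: C)) v i = \sum_(i in C) v i + \sum_(i in D) v i.
Proof.
have sdC : ((C :\: D) :|: (D :\: C)) :&: C = C :\: D.
  by apply/setP => i; rewrite !inE; case: (i \in C); case: (i \in D).
have sdNC : ((C :\: D) :|: (D :\: C)) :\: C = D :\: C.
  by apply/setP => i; rewrite !inE; case: (i \in C); case: (i \in D).
rewrite (big_setID C) sdC sdNC [in RHS](big_setID D) [X in _ = _ + X](big_setID C) setIC.
by rewrite addrACA binary_addrr add0r.
Qed.

Lemma binary_circuit_elimination C D e :
  minset (vdependent v) C -> minset (vdependent v) D ->
  e \in (C :\: D) :|: (D :\: C) ->
  exists2 C', minset (vdependent v) C' & (e \in C') && (C' \subset (C :\: D) :|: (D :\: C)).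
Proof.
move=> circC circD; apply: binary_zero_sum_circuit.
by rewrite binary_sum_symdiff !binary_circuit_sum ?addr0.
Qed.

End BinaryRepresentation.

Lemma F2_cases (x : 'F_2) : x = 0 \/ x = 1.
Proof. by case: x => [[|[|m]] lt_x2]; [left | right | by []]; apply: val_inj. Qed.

Lemma iso_F2P (K : fieldType) : iso_F2 K <-> forall k : K, k = 0 \/ k = 1.
Proof.
split=> [[f [g fK gK]] k | K01].
  rewrite -[k]gK.
  by have [->|->] := F2_cases (g k); rewrite ?rmorph0 ?rmorph1; [left | right].
pose f (x : 'F_2) : K := if x == 0 then 0 else 1.
have f_add : nmod_morphism f.
  split=> [|x y]; rewrite /f ?eqxx //.
  have [->|->] := F2_cases x; have [->|->] := F2_cases y;
    by rewrite ?addr0 ?add0r ?(binary_char2 F2_cases) ?eqxx ?oner_eq0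
               ?addr0 ?(binary_char2 K01).
have f_mul : monoid_morphism f.
  split=> [|x y]; rewrite /f ?oner_eq0 //.
  by have [->|->] := F2_cases x; have [->|->] := F2_cases y;
    rewrite ?mulr0 ?mul0r ?mulr1 ?eqxx ?oner_eq0 ?mulr0 ?mulr1.
pose f_rmorph : {rmorphism 'F_2 -> K} :=
  HB.pack f (GRing.isNmodMorphism.Build _ _ f f_add)
    (GRing.isMonoidMorphism.Build _ _ f f_mul).
exists f_rmorph, (fun k => if k == 0 then 0 else 1) => [x | k] /=; rewrite /f.
  by have [->|->] := F2_cases x; rewrite ?eqxx ?oner_eq0.
by have [->|->] := K01 k; rewrite ?eqxx ?oner_eq0.
Qed.

Lemma not_iso_F2 (K : fieldType) : ~ iso_F2 K -> exists a : K, a != 0 /\ a != 1.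
Proof.
move=> notF2; apply: NNPP => no_a; apply/notF2/iso_F2P => k.
apply: NNPP => k01; apply: no_a; exists k.
by split; apply/eqP => k_eq; apply: k01; [left | right].
Qed.

Lemma free_image_card_le (K : fieldType) (vT : vectType K) (T : finType) (v : T -> vT)
    (S : {set T}) :
  free [seq v i | i in S] -> (#|S| <= \dim {:vT})%N.
Proof. by rewrite /free size_image => /eqP <-; apply/dimvS/subvf. Qed.

Lemma det2_indep (K : fieldType) (u w : 'rV[K]_2) (c1 c2 : K) :
  u 0 0 * w 0 1 - u 0 1 * w 0 0 != 0 -> c1 *: u + c2 *: w = 0 -> c1 = 0.
Proof.
move=> det_uw /rowP uw0; have := uw0 0; have := uw0 1; rewrite !mxE => uw1 uw0'.
have : c1 * (u 0 0 * w 0 1 - u 0 1 * w 0 0) = 0.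
  transitivity (w 0 1 * (c1 * u 0 0 + c2 * w 0 0) - w 0 0 * (c1 * u 0 1 + c2 * w 0 1)).
    by ring.
  by rewrite uw0' uw1 !mulr0 subr0.
by move/eqP; rewrite mulf_eq0 (negbTE det_uw) orbF => /eqP.
Qed.

Definition u24 (K : fieldType) (a : K) (i : 'I_4) : 'rV[K]_2 :=
  \row_(j < 2) (if j == 0 then [:: 1; 1; 1; 0] else [:: 0; 1; a; 1])`_i.

Lemma u24_det (K : fieldType) (a : K) (x y : 'I_4) : a != 0 -> a != 1 -> x != y ->
  u24 a x 0 0 * u24 a y 0 1 - u24 a x 0 1 * u24 a y 0 0 != 0.
Proof.
move=> a0 a1; rewrite !mxE /=.
case: x => [[|[|[|[|?]]]] ?]; case: y => [[|[|[|[|?]]]] ?] //= _;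
  rewrite ?(mulr0, mul0r, mulr1, mul1r, subr0, sub0r, oppr_eq0, oner_eq0, subr_eq0) //;
  by rewrite ?a0 ?a1 // eq_sym ?oner_eq0 ?a0 ?a1.
Qed.

Lemma u24_dependent (K : fieldType) (a : K) : a != 0 -> a != 1 ->
  forall S : {set 'I_4}, vdependent (u24 a) S = (2 < #|S|)%N.
Proof.
move=> a0 a1 S; apply/idP/idP => [|S_gt2]; last first.
  by apply/negP => /free_image_card_le; rewrite dimvf dim_matrix mul1r leqNgt S_gt2.
apply: contraLR; rewrite -leqNgt negbK => S_le2; apply/free_imageP => c sum0 x xS.
have [y xy Sxy] : exists2 y, x != y & S :\ x \subset [set y].
  have /orP[/eqP Sx0 | /cards1P[y Sxy]] : (#|S :\ x| == 0%N) || (#|S :\ x| == 1%N).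
    by move: S_le2; rewrite (cardsD1 x S) xS /= add1n ltnS; case: #|S :\ x| => [|[|]].
  - exists (if x == 0 then 1 else 0); first by case: (eqVneq x 0) => [->|].
    by move/eqP: Sx0; rewrite cards_eq0 => /eqP ->; apply: sub0set.
  - exists y; last by rewrite Sxy.
    have /setD1P[yx _] : y \in S :\ x by rewrite Sxy set11.
    by rewrite eq_sym.
have sum_Sx : \sum_(i in S :\ x) c i *: u24 a i = (if y \in S then c y else 0) *: u24 a y.
  have [yS | yNS] := ifPn.
    have -> : S :\ x = [set y].
      by apply/eqP; rewrite eqEsubset Sxy sub1set !inE eq_sym xy.
    by rewrite big_set1.
  rewrite scale0r big_pred0 // => i; apply/negbTE/negP => /[dup] /(subsetP Sxy).
  by rewrite inE => /eqP -> /setD1P[_]; rewrite (negbTE yNS).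
apply: (det2_indep (c2 := if y \in S then c y else 0) (u24_det a0 a1 xy)).
by rewrite -sum_Sx -big_setD1.
Qed.

Lemma minset_card_gt (T : finType) (r : nat) (S : {set T}) :
  minset (fun A : {set T} => r < #|A|)%N S = (#|S| == r.+1).
Proof.
apply/minsetP/eqP => [[S_gt minS] | Sr]; last first.
  by split=> [|A A_gt AS]; [rewrite Sr | apply/eqP; rewrite eqEcard AS Sr].
apply/eqP; rewrite eqn_leq S_gt andbT leqNgt; apply/negP => S_gt1.
have /set0Pn[x xS] : S != set0 by rewrite -card_gt0 (leq_trans _ S_gt1).
have Sx_gt : (r < #|S :\ x|)%N by move: S_gt1; rewrite (cardsD1 x S) xS.
by have := minS _ Sx_gt (subsetDl S [set x]) => /setP/(_ x); rewrite setD11 xS.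
Qed.

Definition cosingletons n : {set {set 'I_n}} := [set [set~ j] | j : 'I_n].

Lemma setC1_inj n : injective (fun j : 'I_n => [set~ j]).
Proof. by move=> i j /setC_inj/set1_inj. Qed.

Lemma mem_cosingletons n (j : 'I_n) : [set~ j] \in cosingletons n.
Proof. exact: imset_f. Qed.

Lemma cosingletonsE n (S : {set 'I_n.+1}) : (S \in cosingletons n.+1) = (#|S| == n).
Proof.
apply/imsetP/eqP => [[j _ ->] | Sn]; first by rewrite cardsC1 card_ord.
have /cards1P[j Sj] : #|~: S| == 1%N by have := cardsC S; rewrite card_ord Sn; lia.
by exists j; rewrite // -Sj setCK.
Qed.

Lemma u24_circuits (K : fieldType) (a : K) : a != 0 -> a != 1 ->
  cosingletons 4 = [set S | minset (vdependent (u24 a)) S].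
Proof.
move=> a0 a1; apply/setP => S.
by rewrite inE cosingletonsE (minset_eq _ (u24_dependent a0 a1)) minset_card_gt.
Qed.

Lemma cosingletons_matroid n : (1 < n)%N -> is_matroid_circuits (cosingletons n).
Proof.
move=> n_gt1; split.
- apply/imsetP => -[j _ /esym/eqP]; rewrite -cards_eq0 cardsC1 card_ord; lia.
- move=> _ _ /imsetP[i _ ->] /imsetP[j _ ->].
  by rewrite setCS sub1set inE => /eqP ->.
- move=> _ _ e /imsetP[i _ ->] /imsetP[j _ ->] ij _.
  exists [set~ e]; first exact: mem_cosingletons.
  have {}ij : i != j by apply/eqP => eq_ij; apply: ij; rewrite eq_ij.
  apply/subsetP => y /[!inE] ye; rewrite ye /=.
  by case: (eqVneq y i) => [->|//]; rewrite ij.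
Qed.

Lemma cosingletons_simple n : (3 < n)%N -> simple_matroid (cosingletons n).
Proof. by move=> n_gt3 _ /imsetP[j _ ->]; rewrite cardsC1 card_ord; lia. Qed.

Lemma single_meet_setC1 n (m : 'I_n) S : single_meet [set~ m] S = (#|S :\ m| == 1%N).
Proof. by rewrite /single_meet setIC -setDE. Qed.

Lemma cosingletons_gt1 n : (2 < n)%N ->
  forall C, C \in cosingletons n -> (1 < #|C|)%N.
Proof. by move=> n_gt2 _ /imsetP[j _ ->]; rewrite cardsC1 card_ord; lia. Qed.

Lemma mem_cosingletonsD1 n (k m : 'I_n) :
  ([set~ m] \in cosingletons n :\ [set~ k]) = (m != k).
Proof. by rewrite !inE mem_cosingletons andbT (inj_eq (@setC1_inj n)). Qed.

Lemma cosingletonsD1_tropical_basis n (k : 'I_n) : (2 < n)%N ->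
  tropical_basis (cosingletons n) (cosingletons n :\ [set~ k]).
Proof.
move=> n_gt2; apply/(tropical_basisP (cosingletons_gt1 n_gt2)).
split=> [|S noB]; first exact: subsetDl.
apply/forall_inP => _ /imsetP[j _ ->]; rewrite single_meet_setC1.
have noB' m : m != k -> #|S :\ m| != 1%N.
  move=> mk; rewrite -single_meet_setC1; apply: (forall_inP noB).
  by rewrite mem_cosingletonsD1.
have [-> | jk] := eqVneq j k; last exact: noB'.
apply/negP => /cards1P[s Sk].
have /setD1P[sk sS] : s \in S :\ k by rewrite Sk set11.
have [kS | kNS] := boolP (k \in S).
  have cardS : #|S| = 2 by rewrite (cardsD1 k S) kS Sk cards1.
  have cardSs : #|S| = (#|S :\ s|).+1 by rewrite (cardsD1 s S) sS.
  by move: cardS (noB' s sk); rewrite cardSs => -[->].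
have cardS : #|S| = 1%N by rewrite (cardsD1 k S) (negbTE kNS) Sk cards1.
have /set0Pn[m /[!inE] /norP[mk mS]] : ~: (k |: S) != set0.
  rewrite -card_gt0; have := cardsC (k |: S).
  by rewrite cardsU1 kNS cardS card_ord /=; lia.
have := cardsD1 m S; rewrite (negbTE mS) cardS add0n => cardSm.
by have := noB' m mk; rewrite -cardSm.
Qed.

Lemma cosingletons_minimal_tropical_basis n (k : 'I_n) : (2 < n)%N ->
  minimal_tropical_basis (cosingletons n) (cosingletons n :\ [set~ k]).
Proof.
move=> n_gt2; split; first exact: cosingletonsD1_tropical_basis.
move=> B' /properP[B'B [C CB CNB']].
move=> /(tropical_basisP (cosingletons_gt1 n_gt2))[_ basisB'].
have /setD1P[_ /imsetP[j _ Cj]] := CB; subst C.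
have jk : j != k by rewrite -mem_cosingletonsD1.
have noB' : no_single_meet B' [set j; k].
  apply/forall_inP => D DB'; have /setD1P[_ /imsetP[m _ Dm]] := subsetP B'B D DB'.
  have mk : m != k by rewrite -mem_cosingletonsD1 -Dm (subsetP B'B).
  have mj : m != j by apply: contraNneq CNB' => mj; rewrite -mj -Dm.
  rewrite Dm single_meet_setC1; have := cardsD1 m [set j; k].
  by rewrite !inE (negbTE mj) (negbTE mk) cards2 jk /= add0n => <-.
have /forall_inP/(_ [set~ j] (mem_cosingletons j)) := basisB' _ noB'.
by rewrite single_meet_setC1 setU1K ?cards1 // inE.
Qed.

Lemma cosingletons_not_unique n :
  ~ exists! B, minimal_tropical_basis (cosingletons n.+3) B.
Proof.
move=> [B [_ uniqB]].
have B0 := uniqB _ (@cosingletons_minimal_tropical_basis n.+3 ord0 isT).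
have B1 := uniqB _ (@cosingletons_minimal_tropical_basis n.+3 ord_max isT).
have : [set~ ord0] \in cosingletons n.+3 :\ [set~ ord_max].
  by rewrite !inE mem_cosingletons andbT (inj_eq (@setC1_inj _)).
by rewrite -B1 B0 setD11.
Qed.

Theorem theorem5 (F : fieldType -> Prop) :
  (forall (n : nat) (circ : {set {set 'I_n}}),
      is_matroid_circuits circ -> simple_matroid circ ->
      (forall K : fieldType, F K -> representable K circ) ->
      exists! B : {set {set 'I_n}}, minimal_tropical_basis circ B)
  <-> (exists K : fieldType, F K /\ iso_F2 K).
Proof.
split=> [unique | [K [FK /iso_F2P K01]] n circ circ_matroid circ_simple circ_repr].
  apply: NNPP => noF2; apply: (@cosingletons_not_unique 1); apply: unique.
  - exact: cosingletons_matroid.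
  - exact: cosingletons_simple.
  - move=> K FK.
    have [a [a0 a1]] : exists a : K, a != 0 /\ a != 1.
      by apply: not_iso_F2 => F2K; apply: noF2; exists K.
    by exists 2%N, (u24 a); apply: u24_circuits.
have [d [v circE]] := circ_repr K FK.
have [_ circ_clutter _] := circ_matroid.
apply: unique_minimal_tropical_basis => [C /circ_simple/ltnW // | S].
apply: binary_essential_cover => // C D e; rewrite circE => circC circD eCD.
rewrite !inE in circC circD.
have [C' circC' C'CD] := binary_circuit_elimination K01 circC circD eCD.
by exists C' => //; rewrite inE.
Qed.
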